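(* Let $f^i_m:\mathbb{R}^d\to\mathbb{R}$ ($m\in[M]$, $i\in[n]$) be differentiable and $L$-smooth, with $f_m=\frac1n\sum_i f^i_m$, $f=\frac1M\sum_m f_m$, and suppose $f_*=\inf f$, $f_{*,m}=\inf f_m$, $f^i_{*,m}=\inf f^i_m$ are all finite. Fix $x_t\in\mathbb{R}^d$ and $\gamma\le\frac{1}{2Ln}$. For each $m\in[M]$ let $\pi_m$ be a uniformly random permutation of $[n]$ and define $x^0_{t,m}=x_t$, $x^{i+1}_{t,m}=x^i_{t,m}-\gamma\nabla f_m^{\pi_m^i}(x^i_{t,m})$ for $i=0,\dots,n-1$. Then $$\frac{1}{Mn}\sum_{m=1}^M\sum_{i=0}^{n-1}\mathbb{E}\|x_t-x^i_{t,m}\|^2\le 4\gamma^2n^2L\big(f(x_t)-f_*\big)+2\gamma^2n^2L\Delta_*+2\gamma^2nL\frac1M\sum_{m=1}^M\Delta_{*,m},$$ where the expectation is over the permutations.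
   Context: $[k]=\{1,\dots,k\}$. $L$-smooth: $\|\nabla h(x)-\nabla h(y)\|\le L\|x-y\|$ for all $x,y$. $\Delta_*=f_*-\frac1M\sum_{m=1}^M f_{*,m}$ and $\Delta_{*,m}=f_*-\frac1n\sum_{i=1}^n f^i_{*,m}$. Permutations $\pi_m=(\pi_m^0,\dots,\pi_m^{n-1})$ are indexed from $0$. *)

From HB Require Import structures.
From mathcomp Require Import all_boot all_order all_algebra all_fingroup.
From mathcomp Require Import all_classical all_reals all_analysis.
Set Implicit Arguments. Unset Strict Implicit. Unset Printing Implicit Defensive.
Import Order.TTheory GRing.Theory Num.Theory.
Import numFieldNormedType.Exports.
Local Open Scope classical_set_scope.
Local Open Scope ring_scope.

Section Defs.
Variable R : realType.

Definition sqnorm d (v : 'rV[R]_d) : R := \sum_(j < d) (v ord0 j) ^+ 2.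
Definition enorm d (v : 'rV[R]_d) : R := Num.sqrt (sqnorm v).

Definition grad d (h : 'rV[R]_d -> R) (x : 'rV[R]_d) : 'rV[R]_d :=
  \row_(j < d) ('d h x (delta_mx ord0 j : 'rV[R]_d)).

Definition Lsmooth d (L : R) (h : 'rV[R]_d -> R) : Prop :=
  forall x y, enorm (grad h x - grad h y) <= L * enorm (x - y).

(* infimum of a function (finite when its range is bounded below) *)
Definition finf d (h : 'rV[R]_d -> R) : R := inf (range h).

Definition fm M n d (F : 'I_M -> 'I_n -> 'rV[R]_d -> R) (m : 'I_M) (x : 'rV[R]_d) : R :=
  n%:R^-1 * \sum_(i < n) F m i x.
Definition fall M n d (F : 'I_M -> 'I_n -> 'rV[R]_d -> R) (x : 'rV[R]_d) : R :=
  M%:R^-1 * \sum_(m < M) fm F m x.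

Definition Delta_star M n d (F : 'I_M -> 'I_n -> 'rV[R]_d -> R) : R :=
  finf (fall F) - M%:R^-1 * \sum_(m < M) finf (fm F m).
Definition Delta_star_m M n d (F : 'I_M -> 'I_n -> 'rV[R]_d -> R) (m : 'I_M) : R :=
  finf (fall F) - n%:R^-1 * \sum_(i < n) finf (F m i).

(* local shuffled-GD iterates: x^0 = x0, x^{k+1} = x^k - gamma grad f^{pi(k)} (x^k)
   for k < n (for k >= n the sequence is frozen; only k < n is used) *)
Fixpoint rr_iter n d (gamma : R) (h : 'I_n -> 'rV[R]_d -> R) (pi : 'S_n)
    (x0 : 'rV[R]_d) (k : nat) : 'rV[R]_d :=
  match k with
  | 0 => x0
  | k'.+1 =>
      let x := rr_iter gamma h pi x0 k' in
      if (insub k' : option 'I_n) is Some i then x - gamma *: grad (h (pi i)) x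
      else x
  end.

End Defs.

From HB Require Import structures.
From mathcomp Require Import all_boot all_order all_algebra all_fingroup.
From mathcomp Require Import all_classical all_reals all_analysis.
From mathcomp Require Import ring lra.
Set Implicit Arguments. Unset Strict Implicit. Unset Printing Implicit Defensive.
Import Order.TTheory GRing.Theory Num.Theory.
Import numFieldNormedType.Exports.
Local Open Scope classical_set_scope.
Local Open Scope ring_scope.

(* Fix a worker and let a_p be the gradient of its p-th component at x_t.
   Unrolling the shuffled steps, x_t - x^i is gamma times the sum of the
   gradients at the earlier iterates; smoothness replaces them by the a_(pi j)
   at the price of the earlier deviations, and for gamma <= 1/(2Ln) this price
   is absorbed: sum_i |x_t - x^i|^2 <= 8/3 gamma^2 sum_i |sum_(j<i) a_(pi j)|^2.
   Under a uniform permutation, sum_(j<i) a_(pi j) is a sample drawn without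
   replacement, whose second moment is
   i ((n - i) sum_p |a_p|^2 + (i - 1) |sum_p a_p|^2) / (n (n - 1)); summing
   over i bounds the averaged deviation by gamma^2 (|sum_p a_p|^2 + sum_p |a_p|^2).
   The descent lemma gives |grad h x|^2 <= 2L (h x - inf h), for f_m and for
   each f_m^p, and averaging over the workers gives the claim with a slack of
   2 L gamma^2 n (n - 1) (f(x_t) - inf f). *)

Section Euclidean.
Variables (R : realType) (d : nat).
Implicit Types (u v w : 'rV[R]_d) (a : R).

Definition dot u v : R := \sum_(j < d) u ord0 j * v ord0 j.

Lemma sqnorm_dot v : sqnorm v = dot v v.
Proof. by apply: eq_bigr => j _; rewrite expr2. Qed.

Lemma sqnorm_ge0 v : 0 <= sqnorm v.
Proof. by apply: sumr_ge0 => j _; rewrite sqr_ge0. Qed.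

Lemma sqnorm0 : sqnorm (0 : 'rV[R]_d) = 0.
Proof. by rewrite /sqnorm big1 // => j _; rewrite mxE expr0n. Qed.

Lemma dotC u v : dot u v = dot v u.
Proof. by apply: eq_bigr => j _; rewrite mulrC. Qed.

Lemma dotDl u v w : dot (u + v) w = dot u w + dot v w.
Proof. by rewrite /dot -big_split; apply: eq_bigr => j _; rewrite !mxE mulrDl. Qed.

Lemma dotZl a u v : dot (a *: u) v = a * dot u v.
Proof. by rewrite /dot mulr_sumr; apply: eq_bigr => j _; rewrite !mxE mulrA. Qed.

Lemma dotNl u v : dot (- u) v = - dot u v.
Proof. by rewrite -scaleN1r dotZl mulN1r. Qed.

Lemma dotBl u v w : dot (u - v) w = dot u w - dot v w.
Proof. by rewrite dotDl dotNl. Qed.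

Lemma dotDr u v w : dot w (u + v) = dot w u + dot w v.
Proof. by rewrite dotC dotDl !(dotC w). Qed.

Lemma dotZr a u v : dot v (a *: u) = a * dot v u.
Proof. by rewrite dotC dotZl dotC. Qed.

Lemma dotNr u v : dot u (- v) = - dot u v.
Proof. by rewrite dotC dotNl dotC. Qed.

Lemma dot_suml (I : finType) (P : pred I) (w : I -> 'rV[R]_d) u :
  dot (\sum_(i | P i) w i) u = \sum_(i | P i) dot (w i) u.
Proof.
rewrite /dot exchange_big /=; apply: eq_bigr => j _.
by rewrite summxE mulr_suml.
Qed.

Lemma sqnormD u v : sqnorm (u + v) = sqnorm u + 2 * dot u v + sqnorm v.
Proof. rewrite !sqnorm_dot dotDl !dotDr (dotC v u); ring. Qed.

Lemma sqnormZ a v : sqnorm (a *: v) = a ^+ 2 * sqnorm v.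
Proof. by rewrite !sqnorm_dot dotZl dotZr mulrA expr2. Qed.

Lemma sqnormN v : sqnorm (- v) = sqnorm v.
Proof. by rewrite -scaleN1r sqnormZ sqrrN expr1n mul1r. Qed.

Lemma sqnormB u v : sqnorm (u - v) = sqnorm (v - u).
Proof. by rewrite -sqnormN opprB. Qed.

Lemma sqnormD_le u v : sqnorm (u + v) <= 2 * sqnorm u + 2 * sqnorm v.
Proof.
have := sqnorm_ge0 (u - v); rewrite sqnormD dotNr sqnormN sqnormD; lra.
Qed.

(* Expand the nonnegative double sum of the [(x i - x k) ^+ 2]. *)
Lemma sqr_sum_le (I : finType) (P : pred I) (x : I -> R) :
  (\sum_(i | P i) x i) ^+ 2 <= #|P|%:R * \sum_(i | P i) x i ^+ 2.
Proof.
set S := \sum_(i | P i) x i; set Q := \sum_(i | P i) x i ^+ 2.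
have E i : \sum_(k | P k) (x i - x k) ^+ 2 = #|P|%:R * x i ^+ 2 - 2 * x i * S + Q.
  under eq_bigr => k _ do rewrite sqrrB.
  rewrite !big_split /= sumrN sumr_const mulr_natl; congr (_ - _ + _).
  by rewrite mulr_sumr; apply: eq_bigr => k _; ring.
have : 0 <= \sum_(i | P i) \sum_(k | P k) (x i - x k) ^+ 2.
  by do 2![apply: sumr_ge0 => ? _]; apply: sqr_ge0.
under eq_bigr => i _ do rewrite E.
rewrite !big_split /= sumrN sumr_const -mulr_sumr -mulr_suml -mulr_sumr -/S -/Q.
rewrite mulr_natl -[_ *+ #|P|]mulr_natl -[S ^+ 2]mulr1 expr2; nra.
Qed.

Lemma sqnorm_sum_le (I : finType) (P : pred I) (w : I -> 'rV[R]_d) :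
  sqnorm (\sum_(i | P i) w i) <= #|P|%:R * \sum_(i | P i) sqnorm (w i).
Proof.
rewrite /sqnorm exchange_big /= mulr_sumr.
by apply: ler_sum => j _; rewrite summxE; apply: sqr_sum_le.
Qed.

Lemma dot_le_of_sqnorm_le u v a : 0 < a ->
  sqnorm u <= a ^+ 2 * sqnorm v -> dot u v <= a * sqnorm v.
Proof.
move=> a_gt0 u_le; have := sqnorm_ge0 (u - a *: v).
rewrite sqnormD sqnormN sqnormZ dotNr dotZr => expand_ge0.
have : 2 * a * dot u v <= 2 * a * (a * sqnorm v) by nra.
by rewrite ler_pM2l // mulr_gt0.
Qed.

Lemma Lsmooth_sqnorm (L : R) (h : 'rV[R]_d -> R) : 0 <= L -> Lsmooth L h ->
  forall x y, sqnorm (grad h x - grad h y) <= L ^+ 2 * sqnorm (x - y).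
Proof.
have enorm_sq v : enorm v ^+ 2 = sqnorm v by rewrite sqr_sqrtr // sqnorm_ge0.
move=> L_ge0 h_smooth x y; rewrite -!enorm_sq -exprMn ler_pXn2r ?nnegrE ?sqrtr_ge0 //.
by rewrite mulr_ge0 ?sqrtr_ge0.
Qed.

Lemma diff_dot (h : 'rV[R]_d -> R) x v : 'd h x v = dot (grad h x) v.
Proof.
rewrite {1}(matrix_sum_delta v) big_ord1 linear_sum /dot.
apply: eq_bigr => j _; rewrite linearZ /= mxE mulrC.
by rewrite (_ : ord0 = 0) //; case: (0 : 'I_1) => [[]].
Qed.

Section Descent.
Variables (h : 'rV[R]_d -> R) (L : R).
Hypotheses (h_diff : forall x, differentiable h x) (L_gt0 : 0 < L)
  (h_smooth : Lsmooth L h).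

Lemma derive_along_line (x v : 'rV[R]_d) (t : R) :
  is_derive t 1 (fun s : R => h (s *: v + x)) (dot (grad h (t *: v + x)) v).
Proof.
set g := fun s : R => h (s *: v + x).
have g_shift : (fun s : R => s^-1 *: ((g \o shift t) (s *: 1) - g t)) =
    (fun s : R => s^-1 *: ((h \o shift (t *: v + x)) (s *: v) - h (t *: v + x))).
  by apply: funext => s; rewrite /g /= /shift /= [s *: 1]mulr1 scalerDl addrA.
have g_der : derivable g t 1 by rewrite /derivable g_shift; apply: diff_derivable.
apply: is_derive_eq; first exact: derivableP.
by rewrite /derive g_shift -/(derive h _ v) deriveE // diff_dot.
Qed.

Lemma descent (x v : 'rV[R]_d) : h (v + x) <= h x + dot (grad h x) v + L / 2 * sqnorm v.
Proof.
set c0 := dot (grad h x) v; set K := L / 2 * sqnorm v.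
pose phi := (fun t : R => h (t *: v + x)) - c0 \*: id - K \*: (id ^+ 2 : R -> R).
pose dphi t := dot (grad h (t *: v + x)) v - c0 - K * (2 * t).
have phi_der t : is_derive t (1 : R) phi (dphi t).
  (* [g_der] is found by instance resolution when differentiating [phi]. *)
  have g_der := derive_along_line x v t.
  by apply: is_derive_eq; rewrite /dphi ![_%:A]mulr1 /= expr1.
have phi_cont : {within `[0, 1], continuous phi}.
  by apply: derivable_within_continuous => t _; apply: ex_derive.
have [c /[!in_itv] /= /andP[c_gt0 _] mvt] := MVT ltr01 (fun t _ => phi_der t) phi_cont.
have grad_gap : sqnorm (grad h (c *: v + x) - grad h x) <= (L * c) ^+ 2 * sqnorm v.
  rewrite exprMn -mulrA -sqnormZ.
  by have := Lsmooth_sqnorm (ltW L_gt0) h_smooth (c *: v + x) x; rewrite addrK.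
have phi_le0 : phi 1 - phi 0 <= 0.
  rewrite mvt subr0 mulr1 /dphi /c0 -dotBl subr_le0.
  have -> : K * (2 * c) = L * c * sqnorm v by rewrite /K; field.
  exact: dot_le_of_sqnorm_le (mulr_gt0 L_gt0 c_gt0) grad_gap.
move: phi_le0; rewrite /phi !fctE /= scale0r add0r scale1r ![_%:A]mulr1 expr1n expr0n /=.
by rewrite ![_ *: 0]mulr0 [K *: 1]mulr1 !subr0 subr_le0 !lerBlDr addrAC.
Qed.

End Descent.

Definition avg n (H : 'I_n -> 'rV[R]_d -> R) (x : 'rV[R]_d) : R :=
  n%:R^-1 * \sum_(p < n) H p x.

Lemma sqnorm_le_of_quadratic_bound (h : 'rV[R]_d -> R) (L : R) x g :
  0 < L -> has_lbound (range h) ->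
  (forall v, h (v + x) <= h x + dot g v + L / 2 * sqnorm v) ->
  sqnorm g <= 2 * L * (h x - finf h).
Proof.
move=> L_gt0 h_lb upper.
(* Evaluate the quadratic bound at the gradient step [v = - g / L]. *)
have inf_le : finf h <= h (- L^-1 *: g + x).
  by apply: ge_inf => //; exists (- L^-1 *: g + x).
have := upper (- L^-1 *: g); rewrite dotZr sqnormZ sqrrN -sqnorm_dot mulNr.
have -> : L / 2 * (L^-1 ^+ 2 * sqnorm g) = L^-1 / 2 * sqnorm g.
  by field; rewrite gt_eqF.
have Li_gt0 : 0 < L^-1 by rewrite invr_gt0.
move=> up; rewrite -(ler_pM2l Li_gt0).
have -> : L^-1 * (2 * L * (h x - finf h)) = 2 * (h x - finf h).
  by field; rewrite gt_eqF.
move: Li_gt0 (le_trans inf_le up) (sqnorm_ge0 g).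
generalize (L^-1) (h x) (finf h) (sqnorm g) => *; lra.
Qed.

Lemma sqnorm_grad_le (h : 'rV[R]_d -> R) (L : R) x :
  0 < L -> (forall y, differentiable h y) -> Lsmooth L h -> has_lbound (range h) ->
  sqnorm (grad h x) <= 2 * L * (h x - finf h).
Proof.
move=> L_gt0 h_diff h_smooth h_lb.
by apply: sqnorm_le_of_quadratic_bound => // v; apply: descent.
Qed.

Lemma sqnorm_avg_grad_le n (H : 'I_n -> 'rV[R]_d -> R) (L : R) x :
  (0 < n)%N -> 0 < L -> (forall p y, differentiable (H p) y) ->
  (forall p, Lsmooth L (H p)) -> has_lbound (range (avg H)) ->
  sqnorm (n%:R^-1 *: \sum_(p < n) grad (H p) x) <= 2 * L * (avg H x - finf (avg H)).
Proof.
move=> n_gt0 L_gt0 H_diff H_smooth H_lb.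
apply: sqnorm_le_of_quadratic_bound => // v.
have -> : L / 2 * sqnorm v = n%:R^-1 * \sum_(p < n) (L / 2 * sqnorm v).
  by rewrite sumr_const card_ord -mulr_natr; field; rewrite pnatr_eq0 -lt0n.
rewrite /avg dotZl dot_suml -!mulrDr ler_wpM2l ?invr_ge0 ?ler0n // -!big_split /=.
by apply: ler_sum => p _; apply: descent.
Qed.

End Euclidean.

Section ShuffleMoments.
Variables (R : comPzRingType) (n : nat) (W : finType) (sg : W -> {perm 'I_n}).
(* [sg] pushes the uniform distribution on [W] to a left-invariant, hence
   uniform, distribution on permutations. *)
Hypothesis sum_mulg : forall (t : {perm 'I_n}) (h : {perm 'I_n} -> R),
  \sum_w h (sg w) = \sum_w h ((t * sg w)%g).

Lemma sum_perm_at (c : 'I_n -> R) j :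
  n%:R * \sum_w c (sg w j) = #|W|%:R * \sum_p c p.
Proof.
have indep k : \sum_w c (sg w k) = \sum_w c (sg w j).
  rewrite (sum_mulg (tperm k j) (fun s => c (s k))).
  by apply: eq_bigr => w _; rewrite permM tpermL.
have -> : n%:R * \sum_w c (sg w j) = \sum_(k < n) \sum_w c (sg w k).
  by rewrite (eq_bigr _ (fun k _ => indep k)) sumr_const card_ord mulr_natl.
rewrite exchange_big /= [RHS]mulr_natl -sumr_const; apply: eq_big => // w _.
by rewrite [RHS](reindex_inj (@perm_inj _ (sg w))).
Qed.

Lemma sum_perm_pair (b : 'I_n -> R) j k : j != k ->
  (n%:R - 1) * (n%:R * \sum_w b (sg w j) * b (sg w k)) =
  #|W|%:R * ((\sum_p b p) ^+ 2 - \sum_p b p ^+ 2).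
Proof.
move=> jk; pose T k := \sum_w b (sg w j) * b (sg w k).
have indep k' : k' != j -> T k' = T k.
  move=> k'j; rewrite /T (sum_mulg (tperm k' k) (fun s => b (s j) * b (s k'))).
  by apply: eq_bigr => w _; rewrite !permM tpermL tpermD // eq_sym.
have card_neq : (n%:R - 1 : R) = #|[pred k' | k' != j]|%:R.
  by rewrite cardC1 card_ord -subn1 natrB //; case: n j {jk T indep} => [[]|].
have sum_neq : \sum_(k' | k' != j) T k' =
    (\sum_p b p) * \sum_w b (sg w j) - \sum_w b (sg w j) ^+ 2.
  rewrite /T exchange_big /= mulr_sumr -sumrB; apply: eq_bigr => w _.
  rewrite -mulr_sumr expr2 [_ * b _]mulrC -mulrBr; congr (_ * _).
  have -> : \sum_p b p = \sum_k' b (sg w k').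
    by rewrite (reindex_inj (@perm_inj _ (sg w))).
  by rewrite [in RHS](bigD1 j) //= addrC addrK.
have sum_cst : (n%:R - 1) * T k = \sum_(k' | k' != j) T k'.
  by rewrite (eq_bigr _ indep) sumr_const card_neq mulr_natl.
rewrite mulrCA -/(T k) sum_cst sum_neq.
rewrite mulrBr mulrCA sum_perm_at (sum_perm_at (fun p => b p ^+ 2)); ring.
Qed.

Lemma sum_perm_sqr_partial_sum (b : 'I_n -> R) (P : pred 'I_n) :
  n%:R * (n%:R - 1) * \sum_w (\sum_(j | P j) b (sg w j)) ^+ 2 =
  #|W|%:R * #|P|%:R *
    ((n%:R - #|P|%:R) * \sum_p b p ^+ 2 + (#|P|%:R - 1) * (\sum_p b p) ^+ 2).
Proof.
set B := \sum_p b p; set Q := \sum_p b p ^+ 2.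
pose T j k := \sum_w b (sg w j) * b (sg w k).
have expand : \sum_w (\sum_(j | P j) b (sg w j)) ^+ 2 = \sum_(j | P j) \sum_(k | P k) T j k.
  under eq_bigr => w _ do rewrite expr2 big_distrl /=.
  rewrite exchange_big /=; apply: eq_bigr => j _.
  by under eq_bigr => w _ do rewrite big_distrr /=; rewrite exchange_big.
have row j : P j -> n%:R * (n%:R - 1) * \sum_(k | P k) T j k =
    #|W|%:R * ((n%:R - 1) * Q + (#|P|%:R - 1) * (B ^+ 2 - Q)).
  move=> Pj; rewrite (bigD1 j) //=.
  have diag : n%:R * T j j = #|W|%:R * Q.
    by rewrite /T -(sum_perm_at (fun p => b p ^+ 2) j); under eq_bigr do rewrite -expr2.
  have card_Pj : \sum_(k | P k && (k != j)) (1 : R) = #|P|%:R - 1.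
    have : \sum_(k | P k) (1 : R) = #|P|%:R by rewrite sumr_const.
    by rewrite (bigD1 j) //= => <-; rewrite addrC addrK.
  have off : (n%:R - 1) * (n%:R * \sum_(k | P k && (k != j)) T j k) =
      (#|P|%:R - 1) * (#|W|%:R * (B ^+ 2 - Q)).
    rewrite -card_Pj !mulr_sumr mulr_suml; apply: eq_bigr => k /andP[_ kj].
    by rewrite mul1r sum_perm_pair // eq_sym.
  by rewrite mulrDr mulrAC diag -mulrA mulrCA off; ring.
rewrite expand mulr_sumr (eq_bigr _ row) sumr_const -mulr_natr; ring.
Qed.
End ShuffleMoments.

Lemma sum_perm_sqnorm_partial_sum (R : realType) d n (W : finType)
    (sg : W -> {perm 'I_n}) (a : 'I_n -> 'rV[R]_d) (P : pred 'I_n) :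
  (forall (t : {perm 'I_n}) (h : {perm 'I_n} -> R),
     \sum_w h (sg w) = \sum_w h ((t * sg w)%g)) ->
  n%:R * (n%:R - 1) * \sum_w sqnorm (\sum_(j | P j) a (sg w j)) =
  #|W|%:R * #|P|%:R *
    ((n%:R - #|P|%:R) * \sum_p sqnorm (a p) + (#|P|%:R - 1) * sqnorm (\sum_p a p)).
Proof.
move=> sum_mulg.
rewrite /sqnorm [in LHS]exchange_big [in X in _ * X + _]exchange_big /=.
rewrite !mulr_sumr -big_split /= mulr_sumr; apply: eq_bigr => c _.
have := sum_perm_sqr_partial_sum sum_mulg (fun p => a p ord0 c) P.
by under eq_bigr => w _ do rewrite summxE; rewrite summxE => ->.
Qed.

Lemma sum_ffun_perm_mulg (R : comPzRingType) M n (m : 'I_M) (t : {perm 'I_n})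
    (h : {perm 'I_n} -> R) :
  \sum_(P : {ffun 'I_M -> {perm 'I_n}}) h (P m) =
  \sum_(P : {ffun 'I_M -> {perm 'I_n}}) h ((t * P m)%g).
Proof.
pose mul_at (P : {ffun 'I_M -> {perm 'I_n}}) : {ffun 'I_M -> {perm 'I_n}} :=
  [ffun m' => if m' == m then (t * P m')%g else P m'].
have mul_at_inj : injective mul_at.
  move=> P1 P2 /ffunP E; apply/ffunP => m'; have := E m'; rewrite !ffunE.
  by case: (m' == m) => // /mulgI.
rewrite (reindex_inj mul_at_inj); apply: eq_bigr => P _.
by rewrite ffunE eqxx.
Qed.

Lemma card_ord_lt n i : (i <= n)%N -> #|[pred j : 'I_n | (j < i)%N]| = i.
Proof.
move=> le_in; rewrite -sum1_card.
have -> : \sum_(j in [pred j : 'I_n | (j < i)%N]) 1%N = \sum_(j < n | (j < i)%N) 1%N by [].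
by rewrite (big_ord_narrow le_in) sum1_card card_ord.
Qed.

Lemma sum_natr_ord (R : numFieldType) n :
  \sum_(i < n) (i%:R : R) = n%:R * (n%:R - 1) / 2.
Proof.
elim: n => [|n IH]; first by rewrite big_ord0 !mul0r.
by rewrite big_ord_recr /= IH -addn1 natrD; field.
Qed.

Lemma sum_natr_sqr_ord (R : numFieldType) n :
  \sum_(i < n) (i%:R ^+ 2 : R) = n%:R * (n%:R - 1) * (2 * n%:R - 1) / 6.
Proof.
elim: n => [|n IH]; first by rewrite big_ord0 !mul0r.
by rewrite big_ord_recr /= IH -addn1 natrD; field.
Qed.

Section ShuffledIterates.
Variables (R : realType) (d n : nat) (gamma L : R) (h : 'I_n -> 'rV[R]_d -> R)
  (pi : {perm 'I_n}) (x0 : 'rV[R]_d).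
Hypotheses (L_ge0 : 0 <= L) (h_smooth : forall p, Lsmooth L (h p)).
Let x k := rr_iter gamma h pi x0 k.

Lemma rr_iter_step k (lt_kn : (k < n)%N) :
  x k.+1 = x k - gamma *: grad (h (pi (Ordinal lt_kn))) (x k).
Proof. by rewrite /x /= insubT. Qed.

Lemma rr_iter_sum k : (k <= n)%N ->
  x k = x0 - gamma *: \sum_(j < n | (j < k)%N) grad (h (pi j)) (x j).
Proof.
elim: k => [_|k IH lt_kn]; first by rewrite big_pred0 // scaler0 subr0.
rewrite rr_iter_step {1}IH 1?ltnW // [in RHS](bigD1 (Ordinal lt_kn)) //=.
rewrite scalerDr opprD addrA addrAC.
suff -> : \sum_(j < n | (j < k.+1)%N && (j != Ordinal lt_kn)) grad (h (pi j)) (x j) =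
    \sum_(j < n | (j < k)%N) grad (h (pi j)) (x j) by [].
by apply: eq_bigl => j; rewrite ltnS ltn_neqAle andbC.
Qed.

Let dev k := sqnorm (x0 - x k).
Let drift (i : nat) := sqnorm (\sum_(j < n | (j < i)%N) grad (h (pi j)) x0).

(* The step of iterate i is the gradient sum at x0 plus the gradient errors
   along the path, each controlled by smoothness. *)
Lemma dev_le i : (i <= n)%N ->
  dev i <= 2 * gamma ^+ 2 * L ^+ 2 * i%:R * \sum_(j < n | (j < i)%N) dev j
           + 2 * gamma ^+ 2 * drift i.
Proof.
move=> le_in; rewrite /dev rr_iter_sum // subKr sqnormZ.
set err := \sum_(j < n | (j < i)%N) (grad (h (pi j)) (x j) - grad (h (pi j)) x0).
have -> : \sum_(j < n | (j < i)%N) grad (h (pi j)) (x j) =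
    err + \sum_(j < n | (j < i)%N) grad (h (pi j)) x0.
  by rewrite /err -big_split /=; apply: eq_bigr => j _; rewrite subrK.
have err_le : sqnorm err <= L ^+ 2 * i%:R * \sum_(j < n | (j < i)%N) dev j.
  apply: le_trans (sqnorm_sum_le _ _) _.
  rewrite card_ord_lt // [L ^+ 2 * _]mulrC -mulrA ler_wpM2l // mulr_sumr.
  by apply: ler_sum => j _; rewrite /dev sqnormB; apply: Lsmooth_sqnorm.
apply: le_trans (ler_wpM2l (sqr_ge0 gamma) (sqnormD_le _ _)) _.
have -> : gamma ^+ 2 * (2 * sqnorm err + 2 * drift i) =
    2 * gamma ^+ 2 * sqnorm err + 2 * gamma ^+ 2 * drift i by ring.
rewrite lerD2r; apply: le_trans (ler_wpM2l _ err_le) _; first by rewrite mulr_ge0 ?sqr_ge0.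
by rewrite !mulrA.
Qed.

(* Summing [dev_le] over i costs at most a quarter of the total deviation,
   which is absorbed on the left. *)
Lemma sum_dev_le : 0 <= gamma -> gamma ^+ 2 * L ^+ 2 * n%:R ^+ 2 <= 1 / 4 ->
  \sum_(i < n) dev i <= 8 / 3 * gamma ^+ 2 * \sum_(i < n) drift i.
Proof.
move=> gamma_ge0 small_step; set S := \sum_(i < n) dev i.
have S_ge0 : 0 <= S by apply: sumr_ge0 => i _; apply: sqnorm_ge0.
have S_le : S <= \sum_(i < n) (2 * gamma ^+ 2 * L ^+ 2 * i%:R * S + 2 * gamma ^+ 2 * drift i).
  apply: ler_sum => i _; apply: le_trans (dev_le (ltnW (ltn_ord i))) _.
  rewrite lerD2r ler_wpM2l ?mulr_ge0 ?sqr_ge0 ?ler0n //.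
  rewrite /S [X in _ <= X](bigID (fun j : 'I_n => (j < i)%N)) /= lerDl.
  by apply: sumr_ge0 => j _; apply: sqnorm_ge0.
rewrite big_split /= -mulr_suml -mulr_sumr sum_natr_ord -mulr_sumr in S_le.
have coef_le : 2 * gamma ^+ 2 * L ^+ 2 * (n%:R * (n%:R - 1) / 2) <= 1 / 4.
  apply: le_trans small_step; rewrite -subr_ge0.
  have -> : gamma ^+ 2 * L ^+ 2 * n%:R ^+ 2 - 2 * gamma ^+ 2 * L ^+ 2 * (n%:R * (n%:R - 1) / 2)
     = (gamma * L) ^+ 2 * n%:R by field.
  by rewrite mulr_ge0 ?sqr_ge0.
have := le_trans S_le (lerD (ler_wpM2r S_ge0 coef_le) (lexx _)).
rewrite -[2 * gamma ^+ 2 * _]mulrA -[8 / 3 * gamma ^+ 2 * _]mulrA.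
by move: (gamma ^+ 2 * _) => D; lra.
Qed.
End ShuffledIterates.

Section OneWorker.
Variables (R : realType) (M n d : nat) (m : 'I_M) (L gamma : R)
  (h : 'I_n -> 'rV[R]_d -> R) (xt : 'rV[R]_d).
Hypotheses (n_gt0 : (0 < n)%N) (L_ge0 : 0 <= L) (gamma_ge0 : 0 <= gamma)
  (h_smooth : forall p, Lsmooth L (h p)).

Let N : R := #|{ffun 'I_M -> {perm 'I_n}}|%:R.
Let a p := grad (h p) xt.

Lemma card_ffun_perm_gt0 : 0 < N.
Proof. by rewrite ltr0n; apply/card_gt0P; exists [ffun => 1%g]. Qed.

(* Under a uniform shuffle, the first i gradients form a sample of size i
   drawn without replacement. *)
Lemma sum_sqnorm_prefix_le :
  \sum_(i < n) \sum_(P : {ffun 'I_M -> {perm 'I_n}})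
      sqnorm (\sum_(j < n | (j < i)%N) a (P m j))
  <= 3 / 8 * n%:R * N * (sqnorm (\sum_p a p) + \sum_p sqnorm (a p)).
Proof.
set T1 := sqnorm (\sum_p a p); set T2 := \sum_p sqnorm (a p).
have T1_ge0 : 0 <= T1 by apply: sqnorm_ge0.
have T2_ge0 : 0 <= T2 by apply: sumr_ge0 => p _; apply: sqnorm_ge0.
have N_gt0 := card_ffun_perm_gt0.
have [n_le1 | n_gt1] := leqP n 1.
  rewrite big1 ?mulr_ge0 ?addr_ge0 ?ler0n ?(ltW N_gt0) // => i _.
  rewrite big1 // => P _; rewrite big_pred0 ?sqnorm0 // => j.
  by have := leq_trans (ltn_ord i) n_le1; rewrite ltnS leqn0 => /eqP ->.
have nn1_neq0 : n%:R * (n%:R - 1) != 0 :> R.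
  by rewrite mulf_neq0 // ?pnatr_eq0 -?lt0n // subr_eq0 pnatr_eq1 neq_ltn n_gt1 orbT.
have row (i : 'I_n) : n%:R * (n%:R - 1) * \sum_(P : {ffun 'I_M -> {perm 'I_n}})
      sqnorm (\sum_(j < n | (j < i)%N) a (P m j)) =
    N * (n%:R * T2 - T1) * i%:R + N * (T1 - T2) * i%:R ^+ 2.
  rewrite (sum_perm_sqnorm_partial_sum _ _ (sum_ffun_perm_mulg m)).
  by rewrite card_ord_lt 1?ltnW // -/T1 -/T2 -/N; ring.
apply: (@le_trans _ _ (N * (T2 * (n%:R + 1) / 6 + T1 * (n%:R - 2) / 3))).
  rewrite le_eqVlt; apply/orP; left; apply/eqP; apply: (mulfI nn1_neq0).
  rewrite mulr_sumr (eq_bigr _ (fun i _ => row i)) big_split /= -!mulr_sumr.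
  by rewrite sum_natr_ord sum_natr_sqr_ord; field.
rewrite -subr_ge0.
have -> : 3 / 8 * n%:R * N * (T1 + T2) - N * (T2 * (n%:R + 1) / 6 + T1 * (n%:R - 2) / 3)
   = N * (T2 * (5 * n%:R - 4) + T1 * (n%:R + 16)) / 24 by field.
have n_ge1 : 1 <= n%:R :> R by rewrite ler1n.
by rewrite !mulr_ge0 ?invr_ge0 ?(ltW N_gt0) ?addr_ge0 //; apply: mulr_ge0 => //; lra.
Qed.

Lemma avg_sqnorm_dev_le : gamma ^+ 2 * L ^+ 2 * n%:R ^+ 2 <= 1 / 4 ->
  (n%:R * N)^-1 * \sum_(i < n) \sum_(P : {ffun 'I_M -> {perm 'I_n}})
      sqnorm (xt - rr_iter gamma h (P m) xt i)
  <= gamma ^+ 2 * (sqnorm (\sum_p a p) + \sum_p sqnorm (a p)).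
Proof.
move=> small_step.
have nN_gt0 : 0 < n%:R * N.
  by apply: mulr_gt0; [rewrite ltr0n | exact: card_ffun_perm_gt0].
rewrite ler_pdivrMl // exchange_big /=.
apply: (@le_trans _ _ (\sum_(P : {ffun 'I_M -> {perm 'I_n}}) 8 / 3 * gamma ^+ 2 *
    \sum_(i < n) sqnorm (\sum_(j < n | (j < i)%N) a (P m j)))).
  by apply: ler_sum => P _; apply: (sum_dev_le (L := L)).
rewrite -mulr_sumr exchange_big /=.
apply: le_trans (ler_wpM2l _ sum_sqnorm_prefix_le) _; first by rewrite mulr_ge0 ?sqr_ge0.
by rewrite le_eqVlt; apply/orP; left; apply/eqP; field.
Qed.
End OneWorker.

Section GradientGaps.
Variables (R : realType) (n d : nat) (L : R) (H : 'I_n -> 'rV[R]_d -> R) (x : 'rV[R]_d).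
Hypotheses (n_gt0 : (0 < n)%N) (L_gt0 : 0 < L)
  (H_diff : forall p y, differentiable (H p) y) (H_smooth : forall p, Lsmooth L (H p)).

Lemma sqnorm_sum_grad_le : has_lbound (range (avg H)) ->
  sqnorm (\sum_p grad (H p) x) <= n%:R ^+ 2 * (2 * L * (avg H x - finf (avg H))).
Proof.
move=> H_lb; have n_neq0 : n%:R != 0 :> R by rewrite pnatr_eq0 -lt0n.
have -> : \sum_p grad (H p) x = n%:R *: (n%:R^-1 *: \sum_p grad (H p) x).
  by rewrite scalerA mulfV ?scale1r.
rewrite sqnormZ ler_wpM2l ?sqr_ge0 //.
exact: sqnorm_avg_grad_le.
Qed.

Lemma sum_sqnorm_grad_le : (forall p, has_lbound (range (H p))) ->
  \sum_p sqnorm (grad (H p) x) <= n%:R * (2 * L * (avg H x - n%:R^-1 * \sum_p finf (H p))).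
Proof.
move=> H_lb; apply: (@le_trans _ _ (\sum_p 2 * L * (H p x - finf (H p)))).
  by apply: ler_sum => p _; apply: sqnorm_grad_le.
by rewrite -mulr_sumr sumrB /avg -mulrBr mulrCA mulVKf // pnatr_eq0 -lt0n.
Qed.
End GradientGaps.

Lemma step_size_sqr_le (R : realFieldType) n (L gamma : R) : 0 < L -> (0 < n)%N ->
  0 <= gamma -> gamma <= (2 * L * n%:R)^-1 -> gamma ^+ 2 * L ^+ 2 * n%:R ^+ 2 <= 1 / 4.
Proof.
move=> L_gt0 n_gt0 gamma_ge0 gamma_le.
have c_gt0 : 0 < 2 * L * n%:R by rewrite !mulr_gt0 // ltr0n.
have t_le1 : gamma * (2 * L * n%:R) <= 1 by rewrite -ler_pdivlMr // mul1r.
have t_ge0 : 0 <= gamma * (2 * L * n%:R) by rewrite mulr_ge0 // ltW.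
have -> : gamma ^+ 2 * L ^+ 2 * n%:R ^+ 2 = (gamma * (2 * L * n%:R)) ^+ 2 / 4 by field.
by rewrite ler_pM2r // expr2 mulr_ile1.
Qed.

Lemma worker_dev_le (R : realType) M n d (m : 'I_M) (L gamma : R)
    (h : 'I_n -> 'rV[R]_d -> R) (xt : 'rV[R]_d) :
  (0 < n)%N -> 0 < L -> (forall p y, differentiable (h p) y) ->
  (forall p, Lsmooth L (h p)) -> has_lbound (range (avg h)) ->
  (forall p, has_lbound (range (h p))) ->
  0 <= gamma -> gamma ^+ 2 * L ^+ 2 * n%:R ^+ 2 <= 1 / 4 ->
  (n%:R * #|{ffun 'I_M -> {perm 'I_n}}|%:R)^-1 *
    \sum_(i < n) \sum_(P : {ffun 'I_M -> {perm 'I_n}})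
      sqnorm (xt - rr_iter gamma h (P m) xt i)
  <= 2 * L * gamma ^+ 2 * n%:R ^+ 2 * (avg h xt - finf (avg h))
   + 2 * L * gamma ^+ 2 * n%:R * (avg h xt - n%:R^-1 * \sum_p finf (h p)).
Proof.
move=> n_gt0 L_gt0 h_diff h_smooth avg_lb h_lb gamma_ge0 small_step.
apply: le_trans (avg_sqnorm_dev_le m xt n_gt0 (ltW L_gt0) gamma_ge0 h_smooth small_step) _.
have := lerD (sqnorm_sum_grad_le xt n_gt0 L_gt0 h_diff h_smooth avg_lb)
             (sum_sqnorm_grad_le xt n_gt0 L_gt0 h_diff h_smooth h_lb).
move=> /(ler_wpM2l (sqr_ge0 gamma)) /le_trans; apply.
by rewrite le_eqVlt; apply/orP; left; apply/eqP; ring.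
Qed.

Section Gaps.
Variables (R : realType) (M n d : nat) (F : 'I_M -> 'I_n -> 'rV[R]_d -> R) (x : 'rV[R]_d).

Lemma avg_fm_gap :
  M%:R^-1 * \sum_m (fm F m x - finf (fm F m)) = fall F x - finf (fall F) + Delta_star F.
Proof. by rewrite /Delta_star sumrB mulrBr /fall; ring. Qed.

Lemma avg_F_gap : (0 < M)%N ->
  M%:R^-1 * \sum_m (fm F m x - n%:R^-1 * \sum_i finf (F m i)) =
  fall F x - finf (fall F) + M%:R^-1 * \sum_m Delta_star_m F m.
Proof.
move=> M_gt0; set fs := finf (fall F).
rewrite /Delta_star_m !sumrB sumr_const card_ord !mulrBr /fall -[fs *+ M]mulr_natr.
rewrite [fs * _]mulrC mulKf ?pnatr_eq0 -?lt0n //; ring.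
Qed.
End Gaps.

Theorem mainTheorem8 (R : realType) (M n d : nat) (L gamma : R)
    (F : 'I_M -> 'I_n -> 'rV[R]_d -> R) (xt : 'rV[R]_d) :
  (0 < M)%N -> (0 < n)%N -> 0 < L ->
  (forall m i x, differentiable (F m i) x) ->
  (forall m i, Lsmooth L (F m i)) ->
  has_lbound (range (fall F)) ->
  (forall m, has_lbound (range (fm F m))) ->
  (forall m i, has_lbound (range (F m i))) ->
  0 <= gamma -> gamma <= (2 * L * n%:R)^-1 ->
  (M * n)%:R^-1 *
    \sum_(m < M) \sum_(i < n)
      (#|{ffun 'I_M -> {perm 'I_n}}|%:R^-1 *
        \sum_(P : {ffun 'I_M -> {perm 'I_n}})
          sqnorm (xt - rr_iter gamma (F m) (P m) xt i))
  <= 4 * gamma ^+ 2 * n%:R ^+ 2 * L * (fall F xt - finf (fall F))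
     + 2 * gamma ^+ 2 * n%:R ^+ 2 * L * Delta_star F
     + 2 * gamma ^+ 2 * n%:R * L * (M%:R^-1 * \sum_(m < M) Delta_star_m F m).
Proof.
move=> M_gt0 n_gt0 L_gt0 F_diff F_smooth f_lb fm_lb F_lb gamma_ge0 gamma_le.
have small_step := step_size_sqr_le L_gt0 n_gt0 gamma_ge0 gamma_le.
have M_neq0 : M%:R != 0 :> R by rewrite pnatr_eq0 -lt0n.
have N_neq0 := lt0r_neq0 (card_ffun_perm_gt0 R M n).
set N := #|{ffun 'I_M -> {perm 'I_n}}|%:R in N_neq0 *.
set c := 2 * L * gamma ^+ 2; set gap := fall F xt - finf (fall F).
pose E m := (n%:R * N)^-1 * \sum_(i < n) \sum_(P : {ffun 'I_M -> {perm 'I_n}})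
  sqnorm (xt - rr_iter gamma (F m) (P m) xt i).
have -> : (M * n)%:R^-1 * \sum_(m < M) \sum_(i < n) (N^-1 *
    \sum_(P : {ffun 'I_M -> {perm 'I_n}}) sqnorm (xt - rr_iter gamma (F m) (P m) xt i))
    = M%:R^-1 * \sum_m E m.
  rewrite natrM !mulr_sumr; apply: eq_bigr => m _; rewrite /E -mulr_sumr.
  by field; rewrite M_neq0 N_neq0 pnatr_eq0 -lt0n n_gt0.
apply: (@le_trans _ _ (M%:R^-1 * \sum_m (c * n%:R ^+ 2 * (fm F m xt - finf (fm F m))
    + c * n%:R * (fm F m xt - n%:R^-1 * \sum_i finf (F m i))))).
  rewrite ler_wpM2l ?invr_ge0 ?ler0n //; apply: ler_sum => m _.
  exact: worker_dev_le (F_diff m) (F_smooth m) (fm_lb m) (F_lb m) gamma_ge0 small_step.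
rewrite big_split /= mulrDr -!mulr_sumr.
rewrite [M%:R^-1 * (_ * _)]mulrCA [M%:R^-1 * (_ * _)]mulrCA avg_fm_gap avg_F_gap //.
have gap_ge0 : 0 <= gap by rewrite subr_ge0; apply: ge_inf => //; exists xt.
have c_ge0 : 0 <= c by rewrite /c mulr_ge0 ?sqr_ge0 // mulr_ge0 // ltW.
have n1_ge0 : 0 <= n%:R - 1 :> R by rewrite subr_ge0 ler1n.
(* The claimed bound exceeds the averaged worker bounds by [c n (n - 1) gap]. *)
have slack := mulr_ge0 (mulr_ge0 (mulr_ge0 c_ge0 (ler0n R n)) n1_ge0) gap_ge0.
move: slack; rewrite -/gap /c.
generalize (Delta_star F) (M%:R^-1 * \sum_(m < M) Delta_star_m F m) => *; lra.
Qed.
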